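(* Let $X$ be an infinite-dimensional Polish topological vector space, $\mathcal F\subset2^{\mathbb N}$ a Furstenberg family, and $T\in\mathfrak L(X)$ hereditarily $\mathcal F$-hypercyclic. Then for every countable family $(A_i)_{i\in I}\subset\mathcal F$ and every family $(V_i)_{i\in I}$ of non-empty open subsets of $X$, the set of $x\in X$ such that $\mathcal N_T(x,V_i)\cap A_i\in\mathcal F$ for all $i\in I$ is dense in $X$.
   Context: A Furstenberg family is a family of non-empty subsets of $\mathbb N$ hereditary upwards. $\mathcal N_T(x,V):=\{n\in\mathbb N:T^nx\in V\}$. $T$ is hereditarily $\mathcal F$-hypercyclic if for every countable family $(V_i)_{i\in I}$ of non-empty open sets and every family $(A_i)_{i\in I}\subset\mathcal F$, there exists $x$ with $\mathcal N_T(x,V_i)\cap A_i\in\mathcal F$ for all $i\in I$. *)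

From HB Require Import structures.
From mathcomp Require Import all_boot all_order all_algebra.
From mathcomp Require Import all_classical all_reals all_analysis.
Set Implicit Arguments. Unset Strict Implicit. Unset Printing Implicit Defensive.
Import Order.TTheory GRing.Theory Num.Theory.
Local Open Scope classical_set_scope.
Local Open Scope ring_scope.

Definition furstenberg_family (F : set (set nat)) : Prop :=
  (forall A, F A -> A !=set0) /\ (forall A B, F A -> A `<=` B -> F B).

Definition return_set (X : Type) (T : X -> X) (x : X) (V : set X) : set nat :=
  [set n | V (iter n T x)].

Definition hereditarily_F_hypercyclic (X : topologicalType) (F : set (set nat))
    (T : X -> X) : Prop :=
  forall (I : Type) (V : I -> set X) (A : I -> set nat),
    countable [set: I] ->
    (forall i, open (V i) /\ V i !=set0) ->
    (forall i, F (A i)) ->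
    exists x : X, forall i, F (return_set T x (V i) `&` A i).

Definition is_metric (R : realType) (X : Type) (d : X -> X -> R) : Prop :=
  (forall x y, 0 <= d x y) /\ (forall x y, d x y = 0 <-> x = y) /\
  (forall x y, d x y = d y x) /\ (forall x y z, d x z <= d x y + d y z).

Definition metric_induces_topology (R : realType) (X : topologicalType)
    (d : X -> X -> R) : Prop :=
  forall U : set X, open U <->
    (forall x, U x -> exists2 e : R, 0 < e & [set y | d x y < e] `<=` U).

Definition metric_complete (R : realType) (X : topologicalType)
    (d : X -> X -> R) : Prop :=
  forall u : nat -> X,
    (forall e : R, 0 < e -> exists N, forall m n, (N <= m)%N -> (N <= n)%N -> d (u m) (u n) < e) ->
    exists l : X, u @ \oo --> l.

Definition polish (R : realType) (X : topologicalType) : Prop :=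
  (exists D : set X, countable D /\ dense D) /\
  (exists d : X -> X -> R, is_metric d /\ metric_induces_topology d /\ metric_complete d).

Definition infinite_dimensional (K : pzRingType) (X : lmodType K) : Prop :=
  forall (n : nat) (v : 'I_n -> X), exists x : X,
    ~ exists c : 'I_n -> K, x = \sum_(i < n) c i *: v i.

From HB Require Import structures.
From mathcomp Require Import all_boot all_order all_algebra.
From mathcomp Require Import all_classical all_reals all_analysis.
Import Order.TTheory GRing.Theory Num.Theory.
Local Open Scope classical_set_scope.
Local Open Scope ring_scope.

(** A metrizable topological vector space with a nonzero vector is
    Hausdorff and has no isolated points, so every non-empty open set [V]
    contains [n + 1] pairwise disjoint non-empty open sets.  Hereditary
    hypercyclicity yields a point whose orbit visits all of them; the first
    visiting times are distinct, so one of them is at least [n], and hence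
    [T^n] has dense range.  Therefore every [T^-n (V_i)] is a non-empty open
    set, and applying hereditary hypercyclicity to the countable family made
    of a given open set [W] and all these preimages gives [x] and [n] with
    [T^n x] in [W] and [N(T^n x, V_i) = N(x, T^-n (V_i))]. *)

Lemma line_continuous {R : realType} {X : topologicalLmodType R^o} (p v : X) :
  continuous (fun t : R^o => p + t *: v).
Proof.
move=> t.
apply: (@continuous_comp _ _ _ (fun t : R^o => (p, t *: v))
  (fun z : X * X => z.1 + z.2) t); last exact: add_continuous.
apply: cvg_pair; first exact: cvg_cst.
apply: (@continuous_comp _ _ _ (fun t : R^o => (t, v))
  (fun z : R^o * X => z.1 *: z.2) t); last exact: scale_continuous.
by apply: (@cvg_pair _ _ _ _ (nbhs t)); [exact: cvg_id|exact: cvg_cst].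
Qed.

Lemma tvs_perfect {R : realType} {X : topologicalLmodType R^o} :
  (exists v : X, v != 0) -> perfect_set [set: X].
Proof.
move=> [v v0]; apply/perfectTP => p open_p.
have open_line := (continuousP _).1 (line_continuous p v) _ open_p.
have line_at0 : (fun t : R^o => p + t *: v) 0 = p by rewrite scale0r addr0.
have [t [/= /eqP]] := dense_set1C (0 : R) (ex_intro _ 0 line_at0) open_line.
rewrite -subr_eq0 addrAC subrr add0r scaler_eq0 (negbTE v0) orbF.
by move=> /eqP.
Qed.

Section metric.
Context {R : realType} {X : topologicalType} {d : X -> X -> R}.
Hypotheses (d_metric : is_metric d) (d_topology : metric_induces_topology d).

Lemma metric_ball_open a e : open [set y | d a y < e].
Proof.
apply/d_topology => x /= dax; exists (e - d a x); first by rewrite subr_gt0.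
move=> y /= dxy; case: d_metric => _ [_ [_ d_triangle]].
by apply: le_lt_trans (d_triangle a x y) _; rewrite -ltrBrDl.
Qed.

Lemma metric_hausdorff : hausdorff_space X.
Proof.
case: d_metric => d_ge0 [d_eq0 [d_sym d_triangle]].
rewrite open_hausdorff => a b ab.
have dab_gt0 : 0 < d a b.
  by rewrite lt_def d_ge0 andbT; apply: contra ab => /eqP /d_eq0 ->.
exists ([set y | d a y < d a b / 2], [set y | d b y < d a b / 2]).
  by split; rewrite inE /= (proj2 (d_eq0 _ _) erefl) divr_gt0.
split; [exact: metric_ball_open|exact: metric_ball_open|].
apply/eqP/seteqP; split => // y /= [ya yb].
have := d_triangle a y b; rewrite (d_sym y b) => /le_lt_trans /(_ (ltrD ya yb)).
by rewrite -splitr ltxx.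
Qed.

End metric.

Lemma inj_ord_exists_ge {n} {m : 'I_n.+1 -> nat} :
  injective m -> exists k, (n <= m k)%N.
Proof.
move=> m_inj; apply: contrapT => no_ge.
have m_lt k : (m k < n)%N.
  by rewrite ltnNge; apply/negP => nm; apply: no_ge; exists k.
have /leq_card : injective (fun k => Ordinal (m_lt k)).
  by move=> j k /(congr1 val) /m_inj.
by rewrite !card_ord ltnn.
Qed.

Section perfect_hausdorff.
Context {X : topologicalType}.
Hypotheses (X_hausdorff : hausdorff_space X) (X_perfect : perfect_set [set: X]).

Lemma disjoint_open_subsets n (U : set X) : open U -> U !=set0 ->
  exists f : nat -> set X,
    (forall k, (k < n)%N -> [/\ open (f k), f k !=set0 & f k `<=` U]) /\
    trivIset [set k | (k < n)%N] f.
Proof.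
elim: n U => [|n IHn] U oU U0; first by exists (fun=> set0); split.
have [x [y [Ux Uy xy]]] := perfectTP_ex.1 X_perfect U oU U0.
move: X_hausdorff; rewrite open_hausdorff => /(_ x y xy).
move=> [[P Q] /= [/set_mem Px /set_mem Qy] [oP oQ /eqP PQ0]].
have [f [f_open f_triv]] := IHn (U `&` P) (openI oU oP) (ex_intro _ x (conj Ux Px)).
have f_disjQ k : (k < n)%N -> U `&` Q `&` f k !=set0 -> False.
  move=> kn [z [[_ Qz] fz]]; have [_ _ /(_ z fz) [_ Pz]] := f_open k kn.
  by rewrite -[False]/(set0 z) -PQ0.
exists (fun k => if k == n then U `&` Q else f k); split.
  move=> k; rewrite ltnS leq_eqVlt => /predU1P[->|kn]; rewrite ?eqxx ?ltn_eqF//.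
    by split; [exact: openI|exists y|exact: subIsetl].
  by have [? ? fU] := f_open k kn; split=> // z /fU [].
move=> i j /=; rewrite ltnS leq_eqVlt => /predU1P[->|ilt].
all: rewrite ltnS leq_eqVlt => /predU1P[->|jlt] //.
- by rewrite eqxx (ltn_eqF jlt) => /(f_disjQ _ jlt).
- by rewrite eqxx (ltn_eqF ilt) setIC => /(f_disjQ _ ilt).
- by rewrite (ltn_eqF ilt) (ltn_eqF jlt); exact: f_triv.
Qed.

Lemma hereditarily_hypercyclic_iter_dense {F : set (set nat)} {T : X -> X} :
  furstenberg_family F -> F !=set0 -> hereditarily_F_hypercyclic F T ->
  forall n, dense (range (iter n T)).
Proof.
move=> F_furstenberg [A FA] T_hhc n V V0 oV.
have [f [f_open f_triv]] := disjoint_open_subsets n.+1 V oV V0.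
have f_open_ord (k : 'I_n.+1) : open (f k) /\ f k !=set0.
  by have [? ? _] := f_open k (ltn_ord k).
have [x x_hits] := T_hhc _ (fun k : 'I_n.+1 => f k) (fun=> A)
  (countableP _) f_open_ord (fun=> FA).
have /choice[m m_hits] (k : 'I_n.+1) : exists t, f k (iter t T x).
  by have [t [? _]] := F_furstenberg.1 _ (x_hits k); exists t.
have m_inj : injective m.
  move=> j k mjk; apply/val_inj/(f_triv j k (ltn_ord j) (ltn_ord k)).
  by exists (iter (m j) T x); split; [|rewrite mjk].
have [k nk] := inj_ord_exists_ge m_inj.
have [_ _ /(_ _ (m_hits k)) Vx] := f_open k (ltn_ord k).
exists (iter (m k) T x); split=> //.
by exists (iter (m k - n) T x); rewrite // -iterD subnKC.
Qed.

End perfect_hausdorff.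

Lemma continuous_iter {X : topologicalType} {T : X -> X} n :
  continuous T -> continuous (iter n T).
Proof.
move=> T_cont; elim: n => [|n IHn] x /=; first exact: cvg_id.
exact: continuous_comp (IHn x) (T_cont _).
Qed.

Lemma return_set_iter (X : Type) (T : X -> X) x (V : set X) n :
  return_set T (iter n T x) V = return_set T x (iter n T @^-1` V).
Proof. by apply/seteqP; split => m; rewrite /return_set /= -!iterD addnC. Qed.

Theorem proposition6p4 (R : realType) (X : topologicalLmodType R^o)
    (F : set (set nat)) (T : {linear X -> X}) :
  polish R X ->
  infinite_dimensional X ->
  furstenberg_family F ->
  continuous T ->
  hereditarily_F_hypercyclic F T ->
  forall (I : Type) (A : I -> set nat) (V : I -> set X),
    countable [set: I] ->
    (forall i, F (A i)) ->
    (forall i, open (V i) /\ V i !=set0) ->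
    dense [set x : X | forall i, F (return_set T x (V i) `&` A i)].
Proof.
move=> [_ [d [d_metric [d_topology _]]]] X_infdim F_furstenberg T_cont T_hhc.
move=> I A V I_countable FA V_open W W0 oW.
have X_hausdorff := metric_hausdorff d_metric d_topology.
have X_perfect : perfect_set [set: X].
  apply: tvs_perfect; have [v Nv] := X_infdim 0%N (fun=> 0).
  by exists v; apply/eqP => v0; apply: Nv; exists (fun=> 0); rewrite big_ord0.
have [[i0 _]|I0] := pselect (exists i : I, True); last first.
  by have [w Ww] := W0; exists w; split=> // i; case: I0; exists i.
pose U (j : I * option nat) := if j.2 is Some n then iter n T @^-1` V j.1 else W.
have U_open j : open (U j) /\ U j !=set0.
  case: j => i [n|] //=; have [Vi_open Vi0] := V_open i; split.
    exact: (continuousP _).1 (continuous_iter n T_cont) _ Vi_open.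
  have Tn_dense := hereditarily_hypercyclic_iter_dense X_hausdorff X_perfect
    F_furstenberg (ex_intro _ _ (FA i0)) T_hhc n.
  by have [y [Vy [z _ zy]]] := Tn_dense _ Vi0 Vi_open; exists z; rewrite /U /= zy.
have U_countable : countable [set: I * option nat].
  by rewrite -setXTT; exact: countableX I_countable (countableP _).
have [x x_hits] := T_hhc _ U (fun j => A j.1) U_countable U_open (fun j => FA j.1).
have [n [Wn _]] := F_furstenberg.1 _ (x_hits (i0, None)).
by exists (iter n T x); split=> // i; rewrite return_set_iter; exact: x_hits (i, Some n).
Qed.
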